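(* Let $k\in\mathbb{N}$ and let $(E,d_E)$ be a properly $\mathsf{M}_k$-separated Bratteli diagram with $E^0=\bigsqcup_{n\ge1}V_n$, $V_n=H_n\sqcup\{y_n\}$, and $H=\bigsqcup_nH_n$. Let $G$ be the graph constructed from $(E,d_E)$ as follows. For $v\in H_n$ put $\delta(v)=d_E(v)-\sum_{e\in r_E^{-1}(v)}d_E(s_E(e))-1$, and $m(v)=|y_{n-1}E^*v|$ if $n\ge2$, $m(v)=0$ if $n=1$. Then $G^0=H\sqcup\{z_1,\dots,z_k\}\sqcup\{x_i^v: v\in H,1\le i\le\delta(v)\}$ and $G^1=\{e\in E^1: s_E(e)\in H\}\sqcup\{e_1,\dots,e_{k-1}\}\sqcup\{f_i^v: v\in H,1\le i\le m(v)\}\sqcup\{g_i^v: v\in H,1\le i\le\delta(v)\}$, where edges of $E$ keep their source and range, $e_i$ goes from $z_i$ to $z_k$, $f_i^v$ goes from $z_k$ to $v$, and $g_i^v$ goes from $x_i^v$ to $v$. Then for every $v\in H$, $d_E(v)=|\{\alpha\in G^*: r_G(\alpha)=v\}|$, where $G^*$ is the set of finite paths of $G$ (including vertices as paths of length $0$).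
   Context: A Bratteli diagram $(E,d_E)$ consists of a graph $E=(E^0,E^1,r_E,s_E)$ and $d_E\colon E^0\to\mathbb{N}$ such that $E$ has no sinks, $E^0=\bigsqcup_{n\ge1}W_n$ (levels) with each $W_n$ finite, each edge goes from some $W_n$ to $W_{n+1}$, and $d_E(v)\ge\sum_{e\in r_E^{-1}(v)}d_E(s_E(e))$. With $E^*$ the finite paths and $VE^*W$ the paths from set $V$ to set $W$ ($vE^*w$ for single vertices): $(E,d_E)$ is $\mathsf{M}_k$-separated if (1) $W_n=H_n\sqcup\{y_n\}$; (2) $H_nE^*y_{n+1}=\emptyset$; (3) $d_E(y_n)=k$; (4) $|y_nE^*y_{n+1}|=1$; (5) $y_nE^*H_{n+1}\ne\emptyset$, for all $n$; properly $\mathsf{M}_k$-separated if moreover (6) $d_E(v)>\sum_{e\in r_E^{-1}(v)}d_E(s_E(e))$ for all $n$ and $v\in H_n$. *)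

From mathcomp Require Import all_boot.
Set Implicit Arguments.
Unset Strict Implicit.
Unset Printing Implicit Defensive.

(* A finite path alpha is encoded as the pair (r(alpha), [:: alpha_1; ...; alpha_n])
   with r(alpha_1) = r(alpha) and s(alpha_i) = r(alpha_{i+1}); its source is s(alpha_n).
   The pair (v, [::]) is the length-0 path at the vertex v. *)
Section Paths.
Variables (V Ed : eqType) (s r : Ed -> V).

Fixpoint walk (v : V) (es : seq Ed) : bool :=
  if es is e :: es' then (r e == v) && walk (s e) es' else true.

Fixpoint wsrc (v : V) (es : seq Ed) : V :=
  if es is e :: es' then wsrc (s e) es' else v.

Definition fpath (p : V * seq Ed) : bool := walk p.1 p.2.
Definition prng (p : V * seq Ed) : V := p.1.
Definition psrc (p : V * seq Ed) : V := wsrc p.1 p.2.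

Definition paths_from_to (a b : V) (p : V * seq Ed) : bool :=
  [&& fpath p, psrc p == a & prng p == b].
End Paths.

Definition has_card (T : eqType) (P : T -> Prop) (n : nat) : Prop :=
  exists sq : seq T, [/\ uniq sq, size sq = n & forall x, x \in sq <-> P x].

(* lvl v = n means v \in W_n; rin v is a (duplicate-free) enumeration of r^{-1}(v). *)
Definition is_bratteli (V Ed : eqType) (s r : Ed -> V) (lvl d : V -> nat)
    (rin : V -> seq Ed) : Prop :=
  [/\ (forall v, 1 <= lvl v),
      (forall n, exists sq : seq V, forall v, lvl v = n <-> v \in sq),
      (forall e, lvl (r e) = (lvl (s e)).+1) &
      (forall v, exists e, s e = v)] /\
  (forall v, [/\ uniq (rin v), (forall e, e \in rin v <-> r e = v) &
                  \sum_(e <- rin v) d (s e) <= d v]).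

(* H = union of the H_n = W_n \ {y_n} *)
Definition inH (V : eqType) (lvl : V -> nat) (y : nat -> V) (v : V) : bool :=
  v != y (lvl v).

Definition Mk_separated (V Ed : eqType) (s r : Ed -> V) (lvl d : V -> nat)
    (y : nat -> V) (k : nat) : Prop :=
  forall n, 1 <= n ->
  [/\ lvl (y n) = n,
      (forall u p, lvl u = n -> u != y n -> ~~ paths_from_to s r u (y n.+1) p),
      d (y n) = k,
      has_card (paths_from_to s r (y n) (y n.+1)) 1 &
      exists u p, [/\ lvl u = n.+1, u != y n.+1 & paths_from_to s r (y n) u p]].

Definition properly_Mk_separated (V Ed : eqType) (s r : Ed -> V) (lvl d : V -> nat)
    (rin : V -> seq Ed) (y : nat -> V) (k : nat) : Prop :=
  Mk_separated s r lvl d y k /\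
  (forall v, inH lvl y v -> \sum_(e <- rin v) d (s e) < d v).

(* Vertices: inl (inl v) = v \in H ; inl (inr i) = z_i ; inr (v, i) = x_i^v *)
Definition GV (V : eqType) := (V + nat + (V * nat))%type.
(* Edges: e \in E^1 ; e_i ; f_i^v ; g_i^v *)
Definition GE (V Ed : eqType) := (Ed + nat + (V * nat) + (V * nat))%type.

Section Gconstr.
Variables (V Ed : eqType) (s r : Ed -> V) (lvl d : V -> nat) (rin : V -> seq Ed)
  (y : nat -> V) (k : nat) (m : V -> nat).

Definition GH (v : V) : GV V := inl (inl v).
Definition Gz (i : nat) : GV V := inl (inr i).
Definition Gx (v : V) (i : nat) : GV V := inr (v, i).

Definition delta (v : V) : nat := d v - \sum_(e <- rin v) d (s e) - 1.

Definition Gsrc (a : GE V Ed) : GV V :=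
  match a with
  | inl (inl (inl e)) => GH (s e)
  | inl (inl (inr i)) => Gz i
  | inl (inr (v, i)) => Gz k
  | inr (v, i) => Gx v i
  end.

Definition Grng (a : GE V Ed) : GV V :=
  match a with
  | inl (inl (inl e)) => GH (r e)
  | inl (inl (inr i)) => Gz k
  | inl (inr (v, i)) => GH v
  | inr (v, i) => GH v
  end.

Definition Gvert (x : GV V) : bool :=
  match x with
  | inl (inl v) => inH lvl y v
  | inl (inr i) => (1 <= i <= k)
  | inr (v, i) => inH lvl y v && (1 <= i <= delta v)
  end.

Definition Gedge (a : GE V Ed) : bool :=
  match a with
  | inl (inl (inl e)) => inH lvl y (s e)
  | inl (inl (inr i)) => (1 <= i <= k.-1)
  | inl (inr (v, i)) => inH lvl y v && (1 <= i <= m v)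
  | inr (v, i) => inH lvl y v && (1 <= i <= delta v)
  end.

Definition Gpath (p : GV V * seq (GE V Ed)) : bool :=
  [&& fpath Gsrc Grng p, Gvert p.1 & all Gedge p.2].
End Gconstr.

From Pilot Require Import Defs.
From mathcomp Require Import all_boot zify.

Set Implicit Arguments.
Unset Strict Implicit.
Unset Printing Implicit Defensive.

(* Paths of G ending at a vertex w are counted by P(w) = 1 + sum of P(s a) over the
   G-edges a into w.  The x_i^v and the z_j with j < k are sources, so P = 1 there,
   and then P(z_k) = k.  For v in H_n one argues by induction on n: the edges of E
   into v with source in H contribute the d(s e), the m(v) edges f_i^v contribute k
   each, and the g_i^v contribute delta(v).  The edges of E into v with source
   outside H start at y_(n-1), where d = k, and there are exactly m(v) of them,
   since by levels every path from y_(n-1) to v is a single edge.  Hence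
   P(v) = 1 + delta(v) + sum_(e in r^-1(v)) d(s e) = d(v), the last step being
   where properness (strict inequality at v) is used. *)

Section Cardinality.
Variable T : eqType.
Implicit Types P Q : T -> Prop.

Lemma has_card_unique P n1 n2 : has_card P n1 -> has_card P n2 -> n1 = n2.
Proof.
move=> [s1 [u1 <- m1]] [s2 [u2 <- m2]].
apply/perm_size/uniq_perm => // x.
by apply/idP/idP => [/m1/m2 | /m2/m1].
Qed.

Lemma has_card_ext P Q n : (forall x, P x <-> Q x) -> has_card P n -> has_card Q n.
Proof.
by move=> PQ [sq [u sz msq]]; exists sq; split=> // x; rewrite msq.
Qed.

Lemma has_card_add (x0 : T) P n :
  ~ P x0 -> has_card P n -> has_card (fun x => x = x0 \/ P x) n.+1.
Proof.
move=> Px0 [sq [u <- msq]]; exists (x0 :: sq); split=> //=.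
  by rewrite u andbT; apply/negP => /msq.
move=> x; rewrite inE -msq.
by split=> [/orP[/eqP|]|[->|]]; auto; rewrite ?eqxx // orbC => ->.
Qed.

Lemma has_card_image (U : eqType) (g : T -> U) P n : injective g ->
  has_card P n -> has_card (fun u => exists2 x, P x & u = g x) n.
Proof.
move=> g_inj [sq [u <- msq]]; exists (map g sq); split.
- by rewrite map_inj_uniq.
- by rewrite size_map.
- move=> z; split=> [/mapP[x /msq Px ->] | [x /msq sqx ->]]; first by exists x.
  exact: map_f.
Qed.
End Cardinality.

Lemma has_card_sigma (I T : eqType) (A : seq I) (P : I -> T -> Prop) (f : I -> nat) :
  uniq A -> (forall i, i \in A -> has_card (P i) (f i)) ->
  has_card (fun p : I * T => p.1 \in A /\ P p.1 p.2) (\sum_(i <- A) f i).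
Proof.
elim: A => [|i A IH] /=.
  by move=> _ _; exists [::]; rewrite big_nil; split=> // p; split=> // -[].
move=> /andP[iA uA] cardA.
have [sq [u szsq msq]] := cardA i (mem_head _ _).
have [sqA [uA' szA msqA]] : has_card (fun p : I * T => p.1 \in A /\ P p.1 p.2)
    (\sum_(j <- A) f j) by apply: IH => // j jA; apply: cardA; rewrite inE jA orbT.
exists ([seq (i, x) | x <- sq] ++ sqA); split.
- rewrite cat_uniq map_inj_uniq ?u ?uA' => [/=|x1 x2 [] //].
  rewrite andbT; apply/hasPn => p /msqA[pA _]; apply/mapP => -[x _ pE].
  by move: pA; rewrite pE (negbTE iA).
- by rewrite size_cat size_map szsq szA big_cons.
- case=> j x; rewrite mem_cat inE /=; split.
  + case/orP => [/mapP[x' /msq Px [-> ->]] | /msqA[]]; first by rewrite eqxx.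
    by move=> jA Px; rewrite jA orbT.
  + case=> /orP[/eqP -> Px | jA Px]; apply/orP; [left | right; exact/msqA].
    by apply/map_f/msq.
Qed.

Section SubgraphPaths.
Variables (V Ed : eqType) (s r : Ed -> V) (vertex : pred V) (edge : pred Ed).
Hypothesis edge_src : forall a, edge a -> vertex (s a).

Definition subgraph_path (p : V * seq Ed) : bool :=
  [&& Defs.fpath s r p, vertex p.1 & all edge p.2].

Lemma subgraph_path_cons w a es : vertex w ->
  subgraph_path (w, a :: es) = [&& r a == w, edge a & subgraph_path (s a, es)].
Proof.
rewrite /subgraph_path /Defs.fpath /= => -> /=.
case: (r a == w) => //; case ea: (edge a); rewrite /= ?andbF //.
by rewrite edge_src.
Qed.

Lemma has_card_subgraph_paths_into w (A : seq Ed) (f : Ed -> nat) :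
  vertex w -> uniq A -> (forall a, a \in A <-> edge a /\ r a = w) ->
  (forall a, a \in A -> has_card (fun es => subgraph_path (s a, es)) (f a)) ->
  has_card (fun es => subgraph_path (w, es)) (\sum_(a <- A) f a).+1.
Proof.
move=> w_vert uA memA cardA.
have := has_card_sigma uA cardA.
have cons_inj : injective (fun p : Ed * seq Ed => p.1 :: p.2) by move=> [? ?] [? ?] [-> ->].
have no_nil : ~ exists2 p : Ed * seq Ed, p.1 \in A /\ subgraph_path (s p.1, p.2) &
  [::] = p.1 :: p.2 by case.
move=> /(has_card_image cons_inj) /(has_card_add no_nil).
apply: has_card_ext => [[|a es]].
- split=> [[// | [[? ?] _ //]] | _]; first by rewrite /subgraph_path /Defs.fpath /= w_vert.
  by left.
- rewrite subgraph_path_cons //; split=> [[// | [[b es'] [bA p'] [-> ->]]] | ].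
    by have [-> ->] := (memA b).1 bA; rewrite eqxx.
  case/and3P => /eqP rw ea p; right; exists (a, es) => //; split=> //.
  exact/memA.
Qed.

Lemma has_card_subgraph_paths_into_source w :
  vertex w -> (forall a, edge a -> r a != w) ->
  has_card (fun es => subgraph_path (w, es)) 1.
Proof.
move=> w_vert no_in.
have := @has_card_subgraph_paths_into w [::] (fun=> 0) w_vert isT.
rewrite big_nil; apply=> // a; split=> // -[ea rw].
by move: (no_in a ea); rewrite rw eqxx.
Qed.
End SubgraphPaths.

Section Levels.
Variables (V Ed : eqType) (s r : Ed -> V) (lvl : V -> nat).
Hypothesis lvl_rng : forall e, lvl (r e) = (lvl (s e)).+1.

Lemma lvl_wsrc x es : walk s r x es -> lvl (wsrc s x es) + size es = lvl x.
Proof.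
elim: es x => [|e es IH] x /=; first by rewrite addn0.
by case/andP => /eqP <- /IH; rewrite lvl_rng addnS => ->.
Qed.

Lemma has_card_paths_from_to_next_level u v (rv : seq Ed) :
  uniq rv -> (forall e, e \in rv <-> r e = v) -> lvl v = (lvl u).+1 ->
  has_card (paths_from_to s r u v) (count (fun e => s e == u) rv).
Proof.
move=> urv mrv lvl_v; exists [seq (v, [:: e]) | e <- rv & s e == u]; split.
- by rewrite map_inj_uniq ?filter_uniq // => e1 e2 [].
- by rewrite size_map size_filter.
- case=> x es; split.
    case/mapP => e; rewrite mem_filter => /andP[/eqP su /mrv rv_e] [-> ->].
    by rewrite /paths_from_to /Defs.fpath /psrc /prng /= rv_e su !eqxx.
  case/and3P; rewrite /Defs.fpath /psrc /prng /= => w /eqP su /eqP xv; subst x.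
  have := lvl_wsrc w; rewrite su lvl_v.
  case: es w su => [|e [|? ?]] /=; try lia.
  rewrite andbT => /eqP rv_e su _; apply/mapP; exists e => //.
  by rewrite mem_filter su eqxx; apply/mrv.
Qed.
End Levels.

Section GraphG.
Variables (V Ed : eqType) (s r : Ed -> V) (lvl d : V -> nat) (rin : V -> seq Ed)
  (y : nat -> V) (k : nat) (m : V -> nat).
Hypothesis k_gt0 : 0 < k.

Local Notation H := (inH lvl y).
Local Notation Gv := (Gvert s lvl d rin y k).
Local Notation Ge := (Gedge s lvl d rin y k m).
Local Notation Gs := (Gsrc s k).
Local Notation Gr := (Grng r k).
(* [Gpath s r lvl d rin y k m] unfolds to [subgraph_path Gs Gr Gv Ge]. *)
Local Notation Gpaths_into w := (fun es => subgraph_path Gs Gr Gv Ge (w, es)).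

Lemma Gedge_src a : Ge a -> Gv (Gs a).
Proof. by case: a => [[[e|i]|[u i]]|[u i]] //=; lia. Qed.

Lemma has_card_Gpaths_into_x u i : Gv (Gx u i) -> has_card (Gpaths_into (Gx u i)) 1.
Proof.
move=> x_vert.
apply: (@has_card_subgraph_paths_into_source _ _ Gs Gr Gv Ge Gedge_src _ x_vert).
by case=> [[[?|?]|[? ?]]|[? ?]].
Qed.

Lemma has_card_Gpaths_into_z j : 0 < j < k -> has_card (Gpaths_into (Gz V j)) 1.
Proof.
move=> j_lt_k; have z_vert : Gv (Gz V j) by rewrite /=; lia.
apply: (@has_card_subgraph_paths_into_source _ _ Gs Gr Gv Ge Gedge_src _ z_vert).
have k_neq_j : Gz V k != Gz V j by apply/eqP => -[]; lia.
by case=> [[[?|?]|[? ?]]|[? ?]].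
Qed.

Lemma has_card_Gpaths_into_zk : has_card (Gpaths_into (Gz V k)) k.
Proof.
have z_vert : Gv (Gz V k) by rewrite /=; lia.
pose A := [seq inl (inl (inr j)) : GE V Ed | j <- iota 1 k.-1].
have := @has_card_subgraph_paths_into _ _ Gs Gr Gv Ge Gedge_src _ A (fun=> 1) z_vert.
rewrite big_map big_const_seq count_predT size_iota iter_addn_0 mul1n prednK //.
apply.
- by rewrite map_inj_uniq ?iota_uniq // => ? ? [].
- move=> a; split.
    by case/mapP => j; rewrite mem_iota => ? ->; split=> //=; lia.
  case: a => [[[e|j]|[u i]]|[u i]] /= [? //] _.
  by apply/map_f; rewrite mem_iota; lia.
- move=> a /mapP[j]; rewrite mem_iota => ? ->.
  by apply: has_card_Gpaths_into_z; lia.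
Qed.

Definition paths_to_Gsrc (a : GE V Ed) : nat :=
  match a with
  | inl (inl (inl e)) => d (s e)
  | inl (inl (inr _)) => 1
  | inl (inr _) => k
  | inr _ => 1
  end.

Definition Grin (v : V) : seq (GE V Ed) :=
  [seq inl (inl (inl e)) | e <- rin v & H (s e)] ++
  [seq inl (inr (v, i)) | i <- iota 1 (m v)] ++
  [seq inr (v, i) | i <- iota 1 (delta s d rin v)].

Lemma uniq_Grin v : uniq (rin v) -> uniq (Grin v).
Proof.
move=> urin; rewrite !cat_uniq !map_inj_uniq ?filter_uniq ?iota_uniq //;
  try by move=> ? ? [].
rewrite has_cat negb_or /= !andbT -andbA.
by apply/and3P; split; apply/hasPn => ? /mapP[? _ ->]; apply/mapP => -[? _ /eqP].
Qed.

Lemma mem_Grin v a : H v -> (forall e, e \in rin v <-> r e = v) ->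
  a \in Grin v <-> Ge a /\ Gr a = GH v.
Proof.
move=> Hv rin_v; rewrite !mem_cat; split.
  case/or3P => /mapP[x]; rewrite ?mem_filter ?mem_iota;
    [by case/andP => Hsx /rin_v <- -> | by move=> ? ->; split=> //=; rewrite Hv; lia ..].
case: a => [[[e|j]|[u i]]|[u i]] /= [Ea [Era]] //; apply/or3P.
- by constructor 1; apply/map_f; rewrite mem_filter Ea; apply/rin_v.
- by constructor 2; rewrite -Era; apply/map_f; rewrite mem_iota; lia.
- by constructor 3; rewrite -Era; apply/map_f; rewrite mem_iota; lia.
Qed.

Lemma sum_Grin v : \sum_(a <- Grin v) paths_to_Gsrc a =
  \sum_(e <- rin v | H (s e)) d (s e) + m v * k + delta s d rin v.
Proof.
rewrite !big_cat !big_map big_filter /= !big_const_seq !count_predT !size_iota.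
by rewrite !iter_addn_0 addnA mulnC mul1n.
Qed.

Hypothesis E_bratteli : is_bratteli s r lvl d rin.
Hypothesis E_separated : properly_Mk_separated s r lvl d rin y k.
Hypothesis m_spec : forall v, H v ->
  (lvl v = 1 -> m v = 0) /\
  (2 <= lvl v -> has_card (paths_from_to s r (y (lvl v).-1) v) (m v)).

(* An edge into [H_n] with source outside [H] starts at [y_(n-1)]; such edges are
   exactly the paths from [y_(n-1)] to [v], by levels. *)
Lemma count_rin_notH v : H v -> count (fun e => ~~ H (s e)) (rin v) = m v.
Proof.
move=> Hv; have [[lvl_ge1 _ lvl_rng _] rin_spec] := E_bratteli.
have [urin rin_v _] := rin_spec v.
have [m_lvl1 m_paths] := m_spec Hv.
have lvl_rin e : e \in rin v -> lvl (s e) = (lvl v).-1.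
  by move/rin_v => <-; rewrite lvl_rng.
have [lvl_v1 | lvl_v2] := leqP (lvl v) 1.
  have -> : rin v = [::].
    case: (rin v) lvl_rin => [// | e es /(_ e (mem_head _ _))].
    by have := lvl_ge1 (s e); lia.
  by rewrite m_lvl1 //; have := lvl_ge1 v; lia.
have [lvl_y _ _ _ _] := E_separated.1 (lvl v).-1 ltac:(lia).
rewrite (@eq_in_count _ _ (fun e => s e == y (lvl v).-1)); last first.
  by move=> e /lvl_rin /= lvl_se; rewrite /inH negbK lvl_se.
apply: has_card_unique (has_card_paths_from_to_next_level lvl_rng urin rin_v _)
  (m_paths lvl_v2).
by rewrite lvl_y; lia.
Qed.

Lemma d_split v : H v ->
  d v = (\sum_(e <- rin v | H (s e)) d (s e) + m v * k + delta s d rin v).+1.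
Proof.
move=> Hv; have [[lvl_ge1 _ _ _] _] := E_bratteli.
have sum_notH : \sum_(e <- rin v | ~~ H (s e)) d (s e) = m v * k.
  rewrite (eq_bigr (fun=> k)) => [|e]; last first.
    rewrite /inH negbK => /eqP ->.
    by have [_ _ -> _ _] := E_separated.1 _ (lvl_ge1 (s e)).
  by rewrite big_const_seq iter_addn_0 count_rin_notH // mulnC.
have := E_separated.2 v Hv.
by rewrite /delta (bigID (fun e => H (s e))) /= sum_notH; lia.
Qed.

Lemma has_card_Gpaths_into_H n v : lvl v <= n -> H v -> has_card (Gpaths_into (GH v)) (d v).
Proof.
have [[lvl_ge1 _ lvl_rng _] rin_spec] := E_bratteli.
elim: n v => [|n IH] v lvl_v Hv; first by have := lvl_ge1 v; lia.
have [urin rin_v _] := rin_spec v.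
rewrite d_split // -sum_Grin.
apply: (@has_card_subgraph_paths_into _ _ Gs Gr Gv Ge Gedge_src) => //.
- exact: uniq_Grin.
- by move=> a; apply: mem_Grin.
move=> a; rewrite /Grin !mem_cat => /or3P[] /mapP[x x_in ->] /=.
- move: x_in; rewrite mem_filter => /andP[Hsx /rin_v rx].
  by apply: IH => //; move: lvl_v; rewrite -rx lvl_rng.
- exact: has_card_Gpaths_into_zk.
- by apply: has_card_Gpaths_into_x; move: x_in; rewrite mem_iota /= Hv; lia.
Qed.
End GraphG.

Theorem lemma5p5 (V Ed : eqType) (s r : Ed -> V) (lvl d : V -> nat)
    (rin : V -> seq Ed) (y : nat -> V) (k : nat) (m : V -> nat) :
  0 < k ->
  is_bratteli s r lvl d rin ->
  properly_Mk_separated s r lvl d rin y k ->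
  (* m(v) = |y_{n-1} E^* v| for v \in H_n, n >= 2, and m(v) = 0 for v \in H_1 *)
  (forall v, inH lvl y v ->
     (lvl v = 1 -> m v = 0) /\
     (2 <= lvl v -> has_card (paths_from_to s r (y (lvl v).-1) v) (m v))) ->
  forall v, inH lvl y v ->
    has_card (fun a => Gpath s r lvl d rin y k m a /\ prng a = GH v) (d v).
Proof.
move=> k_gt0 E_bratteli E_separated m_spec v Hv.
have := has_card_Gpaths_into_H k_gt0 E_bratteli E_separated m_spec (leqnn (lvl v)) Hv.
have pair_inj : injective (pair (GH v) : seq (GE V Ed) -> GV V * seq (GE V Ed)).
  by move=> ? ? [].
move/(has_card_image pair_inj); apply: has_card_ext => -[x es].
split=> [[es' p [-> ->]] | [p /= xv]]; first by split; first exact: p.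
by subst x; exists es; first exact: p.
Qed.
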